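(* If independent random variables $X_1,X_2,X_3$ are uniformly distributed on intervals of lengths $a_1,a_2,a_3>0$, then $$I(X_1+X_2+X_3)\le 2\Big[\frac1{a_1a_2}+\frac1{a_1a_3}+\frac1{a_2a_3}\Big].$$
   Context: Fisher information: for $X$ with absolutely continuous density $p$, $I(X)=\int_{\{p>0\}}p'^2/p\,dx$, otherwise $+\infty$. *)

From Stdlib Require Import Reals Lra.
Open Scope R_scope.

Definition unif_density (c a : R) (x : R) : R :=
  if Rle_dec c x then (if Rle_dec x (c + a) then / a else 0) else 0.

Definition improper_RInt (f : R -> R) (l : R) : Prop :=
  forall eps : R, 0 < eps -> exists M : R, forall u v : R,
    u <= - M -> M <= v ->
    exists pr : Riemann_integrable f u v, Rabs (RiemannInt pr - l) < eps.

(* Convolution statement: h = f * g, i.e. h x = int f(y) g(x - y) dy for all x.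
   This is the (continuous version of the) density of the sum of independent
   random variables with densities f and g. *)
Definition is_convolution (f g h : R -> R) : Prop :=
  forall x : R, improper_RInt (fun y => f y * g (x - y)) (h x).

Definition fisher_integrand (p p' : R -> R) (x : R) : R :=
  if Rlt_dec 0 (p x) then (p' x) ^ 2 / p x else 0.

(* "I(p) <= B": p is differentiable everywhere (in particular absolutely
   continuous), with derivative p', and the (nonnegative) integrand
   p'^2/p on {p>0} is Riemann integrable on every compact interval with all
   these integrals bounded by B; hence int_{p>0} p'^2/p <= B. *)
Definition fisher_info_le (p : R -> R) (B : R) : Prop :=
  exists p' : R -> R,
    (forall x : R, derivable_pt_lim p x (p' x)) /\
    (forall u v : R, u <= v ->
       exists pr : Riemann_integrable (fisher_integrand p p') u v,
         RiemannInt pr <= B).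

(* Write L(t) = max 0 (min t a2 a3 (a2+a3-t)) for the trapezoid of height
   min a2 a3 supported on [0, a2+a3].  The density of U2+U3 is
   q(y) = L(y-c2-c3)/(a2 a3), and the density of U1+U2+U3 is
   p(x) = Λ(x-D)/(a1 a2 a3) with D = c1+c2+c3 and Λ(s) = ∫_{s-a1}^{s} L,
   whose derivative is λ(s) = L(s) - L(s-a1) (fundamental theorem of calculus).

   The heart of the argument is an inequality valid for any nonnegative
   1-Lipschitz f: (f s - f r)^2 <= 2 ∫_r^s f, since f dominates a triangle of
   height |f s - f r| under its graph.  Applied to L it gives λ^2 <= 2Λ, so the
   Fisher integrand p'^2/p is bounded by 2/(a1 a2 a3).  It vanishes outside
   [D, D+a1+a2+a3], hence its integral is at most
   2(a1+a2+a3)/(a1 a2 a3), which is the claimed bound.  The remaining work is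
   Riemann integrability: near both ends of the support the integrand is the
   constant 2/(a1 a2 a3), and in between Λ > 0, so it is continuous. *)

From Stdlib Require Import Reals Lra.
From Coquelicot Require Import Coquelicot.
Open Scope R_scope.

Ltac destruct_Rle_dec := repeat match goal with
  | |- context [Rle_dec ?a ?b] => destruct (Rle_dec a b)
  | H : context [Rle_dec ?a ?b] |- _ => destruct (Rle_dec a b)
  end.

(* Coquelicot states its integration lemmas in generic normed modules; this
   rewrites the module operations on R back to field operations on R. *)
Ltac simpl_R_module :=
  repeat match goal with
  | |- context [scal ?k ?r] => change (scal k r) with (Rmult k r)
  | |- context [plus ?x ?y] => change (plus x y) with (Rplus x y)
  | |- context [opp ?x] => change (opp x) with (Ropp x)
  | |- context [minus ?x ?y] => change (minus x y) with (Rminus x y)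
  end;
  try match goal with |- ?a = ?b => change (@eq R a b) end.

(** * Integrals on the real line *)

Lemma RInt_affine (al k a b : R) :
  RInt (fun z => al * (z - k)) a b = al * ((b - k) ^ 2 - (a - k) ^ 2) / 2.
Proof.
  apply is_RInt_unique.
  replace (al * ((b - k) ^ 2 - (a - k) ^ 2) / 2) with
    (minus ((fun z => al * (z - k) ^ 2 / 2) b) ((fun z => al * (z - k) ^ 2 / 2) a))
    by (simpl_R_module; field).
  apply (is_RInt_derive (fun z => al * (z - k) ^ 2 / 2)).
  - intros x _. auto_derive; auto. field.
  - intros x _. apply continuity_pt_filterlim, derivable_continuous_pt. reg.
Qed.

Lemma lipschitz_continuous (f : R -> R) :
  (forall x y, Rabs (f x - f y) <= Rabs (x - y)) -> forall x, continuous f x.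
Proof.
  intros Hf x. apply continuity_pt_filterlim.
  intros eps Heps. exists eps; split; [lra|].
  intros y [_ Hy]. simpl in *. unfold R_dist in *.
  eapply Rle_lt_trans; [apply Hf | exact Hy].
Qed.

Lemma ex_RInt_subinterval (F : R -> R) a b u v :
  a <= u -> u <= v -> v <= b -> ex_RInt F a b -> ex_RInt F u v.
Proof.
  intros H1 H2 H3 E.
  apply (ex_RInt_Chasles_2 F a); [lra|].
  apply (ex_RInt_Chasles_1 F a v b); [lra | exact E].
Qed.

Lemma RInt_subinterval_le (F : R -> R) a b u v :
  a <= u -> u <= v -> v <= b -> ex_RInt F a b -> (forall x, 0 <= F x) ->
  RInt F u v <= RInt F a b.
Proof.
  intros H1 H2 H3 E P.
  rewrite <- (RInt_Chasles F a u b) by (apply (ex_RInt_subinterval F a b); auto; lra).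
  rewrite <- (RInt_Chasles F u v b) by (apply (ex_RInt_subinterval F a b); auto; lra).
  assert (0 <= RInt F a u)
    by (apply RInt_ge_0; auto; try lra; apply (ex_RInt_subinterval F a b); auto; lra).
  assert (0 <= RInt F v b)
    by (apply RInt_ge_0; auto; try lra; apply (ex_RInt_subinterval F a b); auto; lra).
  simpl_R_module. lra.
Qed.

Lemma RInt_zero_on (g : R -> R) a b :
  (forall x, Rmin a b < x < Rmax a b -> g x = 0) -> ex_RInt g a b /\ RInt g a b = 0.
Proof.
  intros H. split.
  - apply ex_RInt_ext with (fun _ => 0); [intros; symmetry; auto | apply ex_RInt_const].
  - rewrite (RInt_ext g (fun _ => 0)) by auto. rewrite RInt_const.
    simpl_R_module. ring.
Qed.

Lemma RInt_window (g h : R -> R) lo hi u v :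
  u <= lo -> lo <= hi -> hi <= v ->
  (forall z, z < lo -> g z = 0) -> (forall z, hi < z -> g z = 0) ->
  (forall z, lo < z < hi -> g z = h z) -> ex_RInt h lo hi ->
  ex_RInt g u v /\ RInt g u v = RInt h lo hi.
Proof.
  intros H1 H2 H3 Zl Zr E Ex.
  destruct (RInt_zero_on g u lo) as [Xl Rl].
  { intros x Hx. rewrite Rmax_right in Hx by lra. apply Zl; lra. }
  destruct (RInt_zero_on g hi v) as [Xr Rr].
  { intros x Hx. rewrite Rmin_left in Hx by lra. apply Zr; lra. }
  assert (Eq : forall x, Rmin lo hi < x < Rmax lo hi -> h x = g x).
  { intros x Hx. rewrite Rmin_left, Rmax_right in Hx by lra. symmetry; apply E; lra. }
  assert (Xm : ex_RInt g lo hi) by (apply ex_RInt_ext with h; auto).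
  assert (Xmr : ex_RInt g lo v) by (apply ex_RInt_Chasles with hi; auto).
  split.
  - apply ex_RInt_Chasles with lo; auto.
  - rewrite <- (RInt_Chasles g u lo v), <- (RInt_Chasles g lo hi v) by auto.
    rewrite Rl, Rr, (RInt_ext g h) by (intros; symmetry; auto).
    simpl_R_module. ring.
Qed.

Lemma RInt_box (g : R -> R) lo hi k u v :
  u <= lo -> u <= hi -> lo <= v -> hi <= v ->
  (forall z, z < lo -> g z = 0) -> (forall z, hi < z -> g z = 0) ->
  (forall z, lo <= z <= hi -> g z = k) ->
  RInt g u v = k * Rmax 0 (hi - lo).
Proof.
  intros H1 H2 H3 H4 Zl Zr E.
  destruct (Rle_dec lo hi).
  - rewrite Rmax_right by lra.
    destruct (RInt_window g (fun _ => k) lo hi u v) as [_ ->]; auto.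
    + intros; apply E; lra.
    + apply ex_RInt_const.
    + rewrite RInt_const. simpl_R_module. ring.
  - rewrite Rmax_left by lra.
    destruct (RInt_window g (fun _ => 0) lo lo u v) as [_ ->]; auto; try lra.
    + intros z Hz. apply Zr; lra.
    + intros; lra.
    + apply ex_RInt_const.
    + rewrite RInt_const. simpl_R_module. ring.
Qed.

Lemma improper_RInt_eventually_const (f : R -> R) l l' K :
  improper_RInt f l -> (forall u v, u <= - K -> K <= v -> RInt f u v = l') -> l = l'.
Proof.
  intros Hl Hl'. destruct (Req_dec l l') as [|Hn]; auto.
  assert (He : 0 < Rabs (l' - l)) by (apply Rabs_pos_lt; lra).
  destruct (Hl _ He) as [M HM].
  pose proof (Rle_abs M). pose proof (Rle_abs K).
  pose proof (Rle_abs (- M)). pose proof (Rle_abs (- K)).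
  rewrite Rabs_Ropp in *.
  destruct (HM (- (Rabs M + Rabs K)) (Rabs M + Rabs K)) as [pr Hpr]; try lra.
  rewrite <- RInt_Reals, Hl' in Hpr by lra. lra.
Qed.

(** * Nonnegative 1-Lipschitz functions *)

Section OneLipschitz.
Variable f : R -> R.
Hypothesis f_nonneg : forall x, 0 <= f x.
Hypothesis f_lip : forall x y, Rabs (f x - f y) <= Rabs (x - y).

Lemma ex_RInt_lipschitz a b : ex_RInt f a b.
Proof.
  apply (@ex_RInt_continuous R_CompleteNormedModule). intros. apply lipschitz_continuous, f_lip.
Qed.

(* If f t >= e, then f lies above the triangle of height e on [t-e, t]. *)
Lemma RInt_ge_left_triangle r s t e :
  r <= t - e -> 0 <= e -> t <= s -> e <= f t -> e ^ 2 / 2 <= RInt f r s.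
Proof.
  intros. eapply Rle_trans;
    [|apply (RInt_subinterval_le f r s (t - e) t); auto; try lra; apply ex_RInt_lipschitz].
  replace (e ^ 2 / 2) with (RInt (fun z => 1 * (z - (t - e))) (t - e) t)
    by (rewrite RInt_affine; simpl_R_module; field).
  apply RInt_le; [lra | | apply ex_RInt_lipschitz |].
  - apply (@ex_RInt_continuous R_CompleteNormedModule). intros.
    apply continuity_pt_filterlim, derivable_continuous_pt. reg.
  - intros x Hx. pose proof (f_lip t x) as Hl. revert Hl. unfold Rabs.
    repeat destruct Rcase_abs; lra.
Qed.

(* Symmetrically, f lies above the triangle of height e on [t, t+e]. *)
Lemma RInt_ge_right_triangle r s t e :
  r <= t -> 0 <= e -> t + e <= s -> e <= f t -> e ^ 2 / 2 <= RInt f r s.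
Proof.
  intros. eapply Rle_trans;
    [|apply (RInt_subinterval_le f r s t (t + e)); auto; try lra; apply ex_RInt_lipschitz].
  replace (e ^ 2 / 2) with (RInt (fun z => -1 * (z - (t + e))) t (t + e))
    by (rewrite RInt_affine; simpl_R_module; field).
  apply RInt_le; [lra | | apply ex_RInt_lipschitz |].
  - apply (@ex_RInt_continuous R_CompleteNormedModule). intros.
    apply continuity_pt_filterlim, derivable_continuous_pt. reg.
  - intros x Hx. pose proof (f_lip t x) as Hl. revert Hl. unfold Rabs.
    repeat destruct Rcase_abs; lra.
Qed.

Lemma sq_increment_le_RInt r s : r <= s -> (f s - f r) ^ 2 <= 2 * RInt f r s.
Proof.
  intros H.
  assert (B : Rabs (f s - f r) <= s - r)
    by (rewrite <- (Rabs_right (s - r)) by lra; apply f_lip).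
  pose proof (f_nonneg r). pose proof (f_nonneg s).
  destruct (Rle_dec (f r) (f s)).
  - rewrite Rabs_right in B by lra.
    pose proof (RInt_ge_left_triangle r s s (f s - f r)). lra.
  - rewrite Rabs_left in B by lra.
    pose proof (RInt_ge_right_triangle r s r (f r - f s)).
    replace ((f s - f r) ^ 2) with ((f r - f s) ^ 2) by ring. lra.
Qed.

End OneLipschitz.

(** * The trapezoid *)

(* [trapezoid a2 a3] is (a2 a3) times the density of U2 + U3 with
   U2 ~ U[0,a2], U3 ~ U[0,a3] independent. *)
Definition trapezoid (a2 a3 t : R) : R :=
  Rmax 0 (Rmin (Rmin t a2) (Rmin a3 (a2 + a3 - t))).

(* L is a composite of 1-Lipschitz maps, hence 1-Lipschitz. *)
Lemma trapezoid_lipschitz a2 a3 x y :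
  Rabs (trapezoid a2 a3 x - trapezoid a2 a3 y) <= Rabs (x - y).
Proof.
  unfold trapezoid, Rmax, Rmin. destruct_Rle_dec;
  unfold Rabs; repeat destruct Rcase_abs; lra.
Qed.

Lemma trapezoid_nonneg a2 a3 t : 0 <= trapezoid a2 a3 t.
Proof. apply Rmax_l. Qed.

Lemma trapezoid_continuous a2 a3 t : continuous (trapezoid a2 a3) t.
Proof. apply lipschitz_continuous, trapezoid_lipschitz. Qed.

Lemma ex_RInt_trapezoid a2 a3 a b : ex_RInt (trapezoid a2 a3) a b.
Proof. apply ex_RInt_lipschitz, trapezoid_lipschitz. Qed.

Lemma trapezoid_reflect_lipschitz a2 a3 w x y :
  Rabs (trapezoid a2 a3 (w - x) - trapezoid a2 a3 (w - y)) <= Rabs (x - y).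
Proof.
  eapply Rle_trans; [apply trapezoid_lipschitz|].
  replace (w - x - (w - y)) with (- (x - y)) by ring. rewrite Rabs_Ropp. lra.
Qed.

Lemma trapezoid_zero_left a2 a3 t : t <= 0 -> trapezoid a2 a3 t = 0.
Proof. intros. unfold trapezoid, Rmax, Rmin. destruct_Rle_dec; lra. Qed.

Lemma trapezoid_zero_right a2 a3 t : a2 + a3 <= t -> trapezoid a2 a3 t = 0.
Proof. intros. unfold trapezoid, Rmax, Rmin. destruct_Rle_dec; lra. Qed.

Lemma trapezoid_rising a2 a3 t : 0 <= t -> t <= a2 -> t <= a3 -> trapezoid a2 a3 t = t.
Proof. intros. unfold trapezoid, Rmax, Rmin. destruct_Rle_dec; lra. Qed.

Lemma trapezoid_falling a2 a3 t :
  a2 <= t -> a3 <= t -> t <= a2 + a3 -> trapezoid a2 a3 t = a2 + a3 - t.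
Proof. intros. unfold trapezoid, Rmax, Rmin. destruct_Rle_dec; lra. Qed.

Lemma trapezoid_pos a2 a3 t :
  0 < a2 -> 0 < a3 -> 0 < t < a2 + a3 -> 0 < trapezoid a2 a3 t.
Proof. intros. unfold trapezoid, Rmax, Rmin. destruct_Rle_dec; lra. Qed.

(* Λ(s) = ∫_{s-a1}^{s} L: (a1 a2 a3) times the density of U1+U2+U3 at s,
   and its derivative λ. *)
Definition conv3 (a1 a2 a3 s : R) : R := RInt (trapezoid a2 a3) (s - a1) s.
Definition conv3_deriv (a1 a2 a3 s : R) : R :=
  trapezoid a2 a3 s - trapezoid a2 a3 (s - a1).

Lemma conv_uniform_uniform a2 a3 c2 c3 q y : 0 < a2 -> 0 < a3 ->
  is_convolution (unif_density c2 a2) (unif_density c3 a3) q ->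
  q y = trapezoid a2 a3 (y - c2 - c3) / (a2 * a3).
Proof.
  intros Ha2 Ha3 Hc.
  set (lo := Rmax c2 (y - c3 - a3)). set (hi := Rmin (c2 + a2) (y - c3)).
  apply (improper_RInt_eventually_const _ _ _ (Rabs lo + Rabs hi + 1) (Hc y)).
  intros u v Hu Hv.
  pose proof (Rle_abs lo). pose proof (Rle_abs hi).
  pose proof (Rle_abs (- lo)). pose proof (Rle_abs (- hi)). rewrite Rabs_Ropp in *.
  rewrite (RInt_box _ lo hi (/ a2 * / a3)); try lra.
  - replace (Rmax 0 (hi - lo)) with (trapezoid a2 a3 (y - c2 - c3))
      by (unfold trapezoid, hi, lo, Rmax, Rmin; destruct_Rle_dec; lra).
    simpl_R_module. field; lra.
  - intros z Hz. unfold lo, Rmax in Hz. unfold unif_density. destruct_Rle_dec; lra.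
  - intros z Hz. unfold hi, Rmin in Hz. unfold unif_density. destruct_Rle_dec; lra.
  - intros z Hz. unfold lo, hi, Rmax, Rmin in Hz. unfold unif_density.
    destruct_Rle_dec; lra.
Qed.

Lemma RInt_trapezoid_reflect a2 a3 w c a :
  RInt (fun y => trapezoid a2 a3 (w - y)) c (c + a) =
  RInt (trapezoid a2 a3) (w - c - a) (w - c).
Proof.
  set (L := trapezoid a2 a3).
  assert (Ex : ex_RInt (fun y => L (-1 * y + w)) c (c + a)).
  { apply ex_RInt_ext with (fun y => L (w - y)).
    - intros y _. f_equal. ring.
    - apply ex_RInt_lipschitz, trapezoid_reflect_lipschitz. }
  assert (Lin : RInt (fun y => -1 * L (-1 * y + w)) c (c + a) =
                RInt L (-1 * c + w) (-1 * (c + a) + w))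
    by exact (RInt_comp_lin L (-1) w c (c + a) (ex_RInt_trapezoid _ _ _ _)).
  assert (Scal : RInt (fun y => -1 * L (-1 * y + w)) c (c + a) =
                 -1 * RInt (fun y => L (-1 * y + w)) c (c + a))
    by exact (RInt_scal _ c (c + a) (-1) Ex).
  assert (Swap : - RInt L (w - c - a) (w - c) = RInt L (w - c) (w - c - a))
    by exact (opp_RInt_swap L _ _ (ex_RInt_trapezoid _ _ _ _)).
  rewrite (RInt_ext _ (fun y => L (-1 * y + w))) by (intros; unfold L; f_equal; ring).
  replace (-1 * c + w) with (w - c) in Lin by ring.
  replace (-1 * (c + a) + w) with (w - c - a) in Lin by ring.
  lra.
Qed.

Lemma conv_uniform_trapezoid a1 a2 a3 c1 c2 c3 q p x : 0 < a1 -> 0 < a2 -> 0 < a3 ->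
  (forall y, q y = trapezoid a2 a3 (y - c2 - c3) / (a2 * a3)) ->
  is_convolution (unif_density c1 a1) q p ->
  p x = conv3 a1 a2 a3 (x - (c1 + c2 + c3)) / (a1 * a2 * a3).
Proof.
  intros Ha1 Ha2 Ha3 Hq Hc.
  assert (Ex : forall a b, ex_RInt (fun y => trapezoid a2 a3 (x - (c2 + c3) - y)) a b)
    by (intros; apply ex_RInt_lipschitz, trapezoid_reflect_lipschitz).
  set (K := Rabs c1 + Rabs (c1 + a1) + 1).
  apply (improper_RInt_eventually_const _ _ _ K (Hc x)).
  intros u v Hu Hv.
  pose proof (Rle_abs c1). pose proof (Rle_abs (c1 + a1)).
  pose proof (Rle_abs (- c1)). pose proof (Rle_abs (- (c1 + a1))). rewrite Rabs_Ropp in *.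
  destruct (RInt_window (fun y => unif_density c1 a1 y * q (x - y))
             (fun y => scal (/ (a1 * a2 * a3)) (trapezoid a2 a3 (x - (c2 + c3) - y)))
             c1 (c1 + a1) u v) as [_ ->]; try (unfold K in *; lra).
  - intros z Hz. unfold unif_density. destruct_Rle_dec; lra.
  - intros z Hz. unfold unif_density. destruct_Rle_dec; lra.
  - intros z Hz. cbv beta. simpl_R_module. rewrite Hq.
    replace (x - z - c2 - c3) with (x - (c2 + c3) - z) by ring.
    unfold unif_density. destruct_Rle_dec; try (exfalso; lra). field; lra.
  - exact (ex_RInt_scal _ _ _ _ (Ex _ _)).
  - rewrite (RInt_scal (fun y => trapezoid a2 a3 (x - (c2 + c3) - y))), RInt_trapezoid_reflect
      by exact (Ex _ _).
    unfold conv3. simpl_R_module.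
    replace (x - (c2 + c3) - c1 - a1) with (x - (c1 + c2 + c3) - a1) by ring.
    replace (x - (c2 + c3) - c1) with (x - (c1 + c2 + c3)) by ring.
    unfold Rdiv. ring.
Qed.

(** * The unnormalized density Λ of U1 + U2 + U3 *)

Section TripleConvolution.
Variables a1 a2 a3 : R.
Hypothesis Ha1 : 0 < a1.
Hypothesis Ha2 : 0 < a2.
Hypothesis Ha3 : 0 < a3.

(* On a neighbourhood of size [edge] of each end of its support, Λ is
   quadratic: only one corner of the box [0,a1]x[0,a2]x[0,a3] is involved. *)
Definition edge : R := Rmin a1 (Rmin a2 a3).

Lemma edge_bounds : 0 < edge /\ edge <= a1 /\ edge <= a2 /\ edge <= a3.
Proof. unfold edge, Rmin. destruct_Rle_dec; lra. Qed.

Lemma conv3_is_derive s : is_derive (conv3 a1 a2 a3) s (conv3_deriv a1 a2 a3 s).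
Proof.
  set (L := trapezoid a2 a3).
  assert (Prim : forall b, is_derive (fun b => RInt L 0 b) b (L b)).
  { intros b. apply (is_derive_RInt L (fun b => RInt L 0 b) 0 b).
    - apply filter_forall. intros. apply (@RInt_correct R_CompleteNormedModule),
        ex_RInt_trapezoid.
    - apply trapezoid_continuous. }
  assert (Shift : is_derive (fun s => s - a1) s 1) by (auto_derive; auto).
  assert (Diff := is_derive_minus _ _ s _ _ (Prim s)
                    (is_derive_comp _ _ s _ _ (Prim (s - a1)) Shift)).
  eapply is_derive_ext.
  2:{ replace (conv3_deriv a1 a2 a3 s) with (minus (L s) (scal 1 (L (s - a1))));
        [exact Diff | unfold conv3_deriv, L; simpl_R_module; ring]. }
  intros t. unfold conv3. fold L. simpl_R_module.
  rewrite <- (RInt_Chasles L 0 (t - a1) t) by apply ex_RInt_trapezoid.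
  simpl_R_module. ring.
Qed.

Lemma conv3_deriv_sq_le s : conv3_deriv a1 a2 a3 s ^ 2 <= 2 * conv3 a1 a2 a3 s.
Proof.
  apply (sq_increment_le_RInt (trapezoid a2 a3)); [apply trapezoid_nonneg |
    apply trapezoid_lipschitz | lra].
Qed.

Lemma conv3_zero_outside s : s <= 0 \/ a1 + a2 + a3 <= s -> conv3 a1 a2 a3 s = 0.
Proof.
  intros H. refine (proj2 (RInt_zero_on _ _ _ _)). intros x Hx.
  rewrite Rmin_left, Rmax_right in Hx by lra.
  destruct H; [apply trapezoid_zero_left | apply trapezoid_zero_right]; lra.
Qed.

Lemma conv3_near_left s : 0 < s <= edge ->
  conv3 a1 a2 a3 s = s ^ 2 / 2 /\ conv3_deriv a1 a2 a3 s = s.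
Proof.
  intros H. destruct edge_bounds as (E0 & E1 & E2 & E3). split.
  - unfold conv3.
    rewrite <- (RInt_Chasles (trapezoid a2 a3) (s - a1) 0 s) by apply ex_RInt_trapezoid.
    assert (Z : RInt (trapezoid a2 a3) (s - a1) 0 = 0).
    { refine (proj2 (RInt_zero_on _ _ _ _)). intros x Hx.
      rewrite Rmax_right in Hx by lra. apply trapezoid_zero_left; lra. }
    rewrite Z.
    rewrite (RInt_ext _ (fun z => 1 * (z - 0))).
    2:{ intros x Hx. rewrite Rmin_left, Rmax_right in Hx by lra.
        rewrite trapezoid_rising; lra. }
    rewrite RInt_affine. simpl_R_module. field.
  - unfold conv3_deriv. rewrite trapezoid_rising, trapezoid_zero_left by lra. ring.
Qed.

Lemma conv3_near_right s : a1 + a2 + a3 - edge <= s < a1 + a2 + a3 ->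
  conv3 a1 a2 a3 s = (a1 + a2 + a3 - s) ^ 2 / 2 /\
  conv3_deriv a1 a2 a3 s = - (a1 + a2 + a3 - s).
Proof.
  intros H. destruct edge_bounds as (E0 & E1 & E2 & E3). split.
  - unfold conv3.
    rewrite <- (RInt_Chasles (trapezoid a2 a3) (s - a1) (a2 + a3) s)
      by apply ex_RInt_trapezoid.
    assert (Z : RInt (trapezoid a2 a3) (a2 + a3) s = 0).
    { refine (proj2 (RInt_zero_on _ _ _ _)). intros x Hx.
      rewrite Rmin_left in Hx by lra. apply trapezoid_zero_right; lra. }
    rewrite Z.
    rewrite (RInt_ext _ (fun z => -1 * (z - (a2 + a3)))).
    2:{ intros x Hx. rewrite Rmin_left, Rmax_right in Hx by lra.
        rewrite trapezoid_falling; lra. }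
    rewrite RInt_affine. simpl_R_module. field.
  - unfold conv3_deriv. rewrite trapezoid_zero_right, trapezoid_falling by lra. ring.
Qed.

(* Away from the ends Λ is positive: some point of [s - a1, s] carries a
   positive value of L, and L lies above a triangle there. *)
Lemma conv3_pos s : edge <= s <= a1 + a2 + a3 - edge -> 0 < conv3 a1 a2 a3 s.
Proof.
  intros H. destruct edge_bounds as (E0 & E1 & E2 & E3).
  set (L := trapezoid a2 a3).
  assert (Triangle : forall t e, s - a1 <= t <= s -> 0 < e ->
            (s - a1 <= t - e \/ t + e <= s) -> e <= L t -> 0 < conv3 a1 a2 a3 s).
  { intros t e Ht He Hside HL. unfold conv3. fold L.
    assert (e ^ 2 / 2 <= RInt L (s - a1) s).
    { destruct Hside.
      - apply (RInt_ge_left_triangle L (trapezoid_nonneg a2 a3)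
                 (trapezoid_lipschitz a2 a3) (s - a1) s t e); lra.
      - apply (RInt_ge_right_triangle L (trapezoid_nonneg a2 a3)
                 (trapezoid_lipschitz a2 a3) (s - a1) s t e); lra. }
    nra. }
  set (h := (a2 + a3) / 2).
  destruct (Rle_dec s h); [|destruct (Rle_dec h (s - a1))].
  - assert (P : 0 < L s) by (apply trapezoid_pos; unfold h in *; lra).
    apply (Triangle s (Rmin (L s) a1)); try lra.
    + apply Rmin_glb_lt; lra.
    + left. pose proof (Rmin_r (L s) a1). lra.
    + apply Rmin_l.
  - assert (P : 0 < L (s - a1)) by (apply trapezoid_pos; unfold h in *; lra).
    apply (Triangle (s - a1) (Rmin (L (s - a1)) a1)); try lra.
    + apply Rmin_glb_lt; lra.
    + right. pose proof (Rmin_r (L (s - a1)) a1). lra.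
    + apply Rmin_l.
  - assert (P : 0 < L h) by (apply trapezoid_pos; unfold h in *; lra).
    apply (Triangle h (Rmin (L h) (h - (s - a1)))); try lra.
    + apply Rmin_glb_lt; lra.
    + left. pose proof (Rmin_r (L h) (h - (s - a1))). lra.
    + apply Rmin_l.
Qed.

Definition fisher3 (s : R) : R :=
  if Rlt_dec 0 (conv3 a1 a2 a3 s)
  then conv3_deriv a1 a2 a3 s ^ 2 / conv3 a1 a2 a3 s else 0.

Lemma fisher3_le_2 s : fisher3 s <= 2.
Proof.
  unfold fisher3. destruct Rlt_dec as [Hpos|]; [|lra].
  pose proof (conv3_deriv_sq_le s).
  apply Rmult_le_reg_r with (conv3 a1 a2 a3 s); [exact Hpos|].
  unfold Rdiv. rewrite Rmult_assoc, Rinv_l by lra. lra.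
Qed.

Lemma fisher3_outside s : s <= 0 \/ a1 + a2 + a3 <= s -> fisher3 s = 0.
Proof.
  intros H. unfold fisher3. rewrite conv3_zero_outside by exact H.
  destruct Rlt_dec; [lra | reflexivity].
Qed.

(* Near the ends, Λ = t^2/2 and λ = ±t, so λ^2/Λ is exactly 2. *)
Lemma fisher3_edges s :
  0 < s <= edge \/ a1 + a2 + a3 - edge <= s < a1 + a2 + a3 -> fisher3 s = 2.
Proof.
  intros H. unfold fisher3.
  destruct H as [H | H];
    [destruct (conv3_near_left s H) as [-> ->] | destruct (conv3_near_right s H) as [-> ->]];
    (destruct Rlt_dec as [|Hn]; [field; lra | exfalso; apply Hn]).
  - apply Rdiv_lt_0_compat; [apply pow_lt|]; lra.
  - apply Rdiv_lt_0_compat; [apply pow_lt|]; lra.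
Qed.

Lemma conv3_deriv_continuous s : continuous (conv3_deriv a1 a2 a3) s.
Proof.
  apply (continuous_minus (trapezoid a2 a3) (fun t => trapezoid a2 a3 (t - a1))).
  - apply trapezoid_continuous.
  - apply (continuous_comp (fun t => t - a1) (trapezoid a2 a3)).
    + apply (continuous_minus (fun t => t) (fun _ => a1));
        [apply continuous_id | apply continuous_const].
    + apply trapezoid_continuous.
Qed.

Lemma fisher3_quotient_continuous s : 0 < conv3 a1 a2 a3 s ->
  continuous (fun t => conv3_deriv a1 a2 a3 t * conv3_deriv a1 a2 a3 t
                       * / conv3 a1 a2 a3 t) s.
Proof.
  intros Hpos.
  apply (continuous_mult (fun t => conv3_deriv a1 a2 a3 t * conv3_deriv a1 a2 a3 t)).
  - apply (continuous_mult (conv3_deriv a1 a2 a3)); apply conv3_deriv_continuous.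
  - apply continuous_Rinv_comp; [|lra].
    apply (ex_derive_continuous (V := R_NormedModule)).
    eexists. apply conv3_is_derive.
Qed.

(* λ^2/Λ is constant near the ends and continuous in between. *)
Lemma ex_RInt_fisher3 : ex_RInt fisher3 0 (a1 + a2 + a3).
Proof.
  destruct edge_bounds as (E0 & E1 & E2 & E3).
  set (A := a1 + a2 + a3).
  assert (Const : forall lo hi, lo <= hi ->
            (forall s, lo < s < hi -> fisher3 s = 2) -> ex_RInt fisher3 lo hi).
  { intros lo hi Hlh Hc. apply ex_RInt_ext with (fun _ => 2); [|apply ex_RInt_const].
    intros s Hs. rewrite Rmin_left, Rmax_right in Hs by lra. symmetry; apply Hc; lra. }
  apply ex_RInt_Chasles with edge.
  { apply Const; [lra|]. intros; apply fisher3_edges; lra. }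
  apply ex_RInt_Chasles with (A - edge).
  2:{ apply Const; [unfold A; lra|]. intros; apply fisher3_edges; unfold A in *; lra. }
  apply ex_RInt_ext with
    (fun t => conv3_deriv a1 a2 a3 t * conv3_deriv a1 a2 a3 t * / conv3 a1 a2 a3 t).
  - intros s Hs. rewrite Rmin_left, Rmax_right in Hs by (unfold A; lra).
    unfold fisher3. destruct Rlt_dec as [|Hn].
    + simpl_R_module. unfold Rdiv. ring.
    + exfalso. apply Hn, conv3_pos. unfold A in *; lra.
  - apply (@ex_RInt_continuous R_CompleteNormedModule). intros s Hs.
    rewrite Rmin_left, Rmax_right in Hs by (unfold A; lra).
    apply fisher3_quotient_continuous, conv3_pos. unfold A in *; lra.
Qed.

End TripleConvolution.

Lemma fisher_info_le_of_support (p p' : R -> R) (K lo hi : R) :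
  (forall x, derivable_pt_lim p x (p' x)) -> lo <= hi ->
  (forall x, fisher_integrand p p' x <= K) ->
  (forall x, x <= lo \/ hi <= x -> fisher_integrand p p' x = 0) ->
  ex_RInt (fisher_integrand p p') lo hi ->
  fisher_info_le p (K * (hi - lo)).
Proof.
  intros Hd Hlh HK Hout Hex. exists p'. split; [exact Hd|].
  intros u v Huv. set (F := fisher_integrand p p').
  assert (F_nonneg : forall x, 0 <= F x).
  { intros x. unfold F, fisher_integrand. destruct Rlt_dec; [|lra].
    apply Rmult_le_pos; [apply pow2_ge_0 | left; apply Rinv_0_lt_compat; lra]. }
  pose (U := Rmin u lo). pose (W := Rmax v hi).
  assert (HU : U <= u /\ U <= lo) by (split; [apply Rmin_l | apply Rmin_r]).
  assert (HW : v <= W /\ hi <= W) by (split; [apply Rmax_l | apply Rmax_r]).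
  destruct (RInt_window F F lo hi U W) as [ExUW IntUW]; try lra; auto.
  1,2: intros z Hz; apply Hout; lra.
  exists (ex_RInt_Reals_0 F u v (ex_RInt_subinterval F U W u v ltac:(lra) Huv ltac:(lra) ExUW)).
  rewrite <- RInt_Reals.
  apply Rle_trans with (RInt F U W); [apply RInt_subinterval_le; auto; lra|].
  rewrite IntUW.
  replace (K * (hi - lo)) with (RInt (fun _ => K) lo hi)
    by (rewrite RInt_const; simpl_R_module; ring).
  apply RInt_le; auto using ex_RInt_const.
Qed.

Section TripleSumDensity.
Variables a1 a2 a3 D : R.
Hypothesis Ha1 : 0 < a1.
Hypothesis Ha2 : 0 < a2.
Hypothesis Ha3 : 0 < a3.
Variable p : R -> R.
Hypothesis p_eq : forall x, p x = conv3 a1 a2 a3 (x - D) / (a1 * a2 * a3).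

Definition density_deriv (x : R) : R := conv3_deriv a1 a2 a3 (x - D) / (a1 * a2 * a3).

Lemma volume_pos : 0 < a1 * a2 * a3.
Proof. apply Rmult_lt_0_compat; [apply Rmult_lt_0_compat|]; lra. Qed.

Lemma density_is_derive x : derivable_pt_lim p x (density_deriv x).
Proof.
  apply is_derive_Reals.
  apply is_derive_ext with (fun x => scal (/ (a1 * a2 * a3)) (conv3 a1 a2 a3 (x - D))).
  { intros t. rewrite p_eq. simpl_R_module. unfold Rdiv. ring. }
  replace (density_deriv x) with
    (scal (/ (a1 * a2 * a3)) (scal 1 (conv3_deriv a1 a2 a3 (x - D))))
    by (unfold density_deriv; simpl_R_module; unfold Rdiv; ring).
  apply is_derive_scal, (is_derive_comp (conv3 a1 a2 a3) (fun x => x - D)).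
  - apply conv3_is_derive.
  - auto_derive; auto.
Qed.

Lemma fisher_integrand_density x :
  fisher_integrand p density_deriv x = fisher3 a1 a2 a3 (x - D) / (a1 * a2 * a3).
Proof.
  pose proof volume_pos.
  unfold fisher_integrand, fisher3, density_deriv. rewrite p_eq.
  destruct (Rlt_dec 0 (conv3 a1 a2 a3 (x - D))) as [Hpos | Hnpos];
    destruct Rlt_dec as [Hq | Hq].
  - field. lra.
  - exfalso. apply Hq, Rdiv_lt_0_compat; lra.
  - exfalso. apply Hnpos. apply Rmult_lt_reg_r with (/ (a1 * a2 * a3));
      [apply Rinv_0_lt_compat; lra | rewrite Rmult_0_l; exact Hq].
  - unfold Rdiv. ring.
Qed.

Lemma fisher_info_triple_density : fisher_info_le p (2 / (a1 * a2 * a3) * (a1 + a2 + a3)).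
Proof.
  pose proof volume_pos.
  replace (a1 + a2 + a3) with (D + (a1 + a2 + a3) - D) by ring.
  apply fisher_info_le_of_support with density_deriv;
    [exact density_is_derive | lra | | |].
  - intros x. rewrite fisher_integrand_density.
    apply Rmult_le_compat_r; [left; apply Rinv_0_lt_compat; lra|].
    apply fisher3_le_2; assumption.
  - intros x Hx. rewrite fisher_integrand_density, fisher3_outside by lra.
    unfold Rdiv. ring.
  - apply ex_RInt_ext with
      (fun x => scal (/ (a1 * a2 * a3)) (scal 1 (fisher3 a1 a2 a3 (1 * x + - D)))).
    + intros x _. rewrite fisher_integrand_density. simpl_R_module.
      replace (1 * x + - D) with (x - D) by ring. unfold Rdiv. ring.
    + assert (E : ex_RInt (fisher3 a1 a2 a3) (1 * D + - D) (1 * (D + (a1 + a2 + a3)) + - D)).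
      { replace (1 * D + - D) with 0 by ring.
        replace (1 * (D + (a1 + a2 + a3)) + - D) with (a1 + a2 + a3) by ring.
        apply ex_RInt_fisher3; assumption. }
      exact (ex_RInt_scal _ _ _ _ (ex_RInt_comp_lin _ _ _ _ _ E)).
Qed.

End TripleSumDensity.

Theorem lemma4p2 (a1 a2 a3 c1 c2 c3 : R) (q p : R -> R) :
  0 < a1 -> 0 < a2 -> 0 < a3 ->
  is_convolution (unif_density c2 a2) (unif_density c3 a3) q ->
  is_convolution (unif_density c1 a1) q p ->
  fisher_info_le p (2 * (/ (a1 * a2) + / (a1 * a3) + / (a2 * a3))).
Proof.
  intros Ha1 Ha2 Ha3 Hq Hp.
  assert (q_eq : forall y, q y = trapezoid a2 a3 (y - c2 - c3) / (a2 * a3))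
    by (intros; apply conv_uniform_uniform; assumption).
  assert (p_eq : forall x, p x = conv3 a1 a2 a3 (x - (c1 + c2 + c3)) / (a1 * a2 * a3))
    by (intros; apply (conv_uniform_trapezoid a1 a2 a3 c1 c2 c3 q); assumption).
  replace (2 * (/ (a1 * a2) + / (a1 * a3) + / (a2 * a3)))
    with (2 / (a1 * a2 * a3) * (a1 + a2 + a3)) by (field; lra).
  exact (fisher_info_triple_density a1 a2 a3 (c1 + c2 + c3) Ha1 Ha2 Ha3 p p_eq).
Qed.
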